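(* For all $q\in Q$, $\overline p'(q)<0$.
   Context: Let $0<q_\ell<q_h<\infty$, $Q=[q_\ell,q_h]$, and let $c$ be a real number with $0<c<q_\ell$. Let $F$ be a probability distribution on $[0,1]$ with support $[0,1]$ admitting a twice continuously differentiable density $f:(0,1)\to\mathbb{R}_{>0}$. Define $r(v)=(1-F(v))/f(v)$ and $\psi(v)=v-r(v)$ on $(0,1)$, and assume $\psi'(v)>0$ whenever $\psi(v)>0$. For $q\in Q$, $p(q)$ is the unique maximizer over $p\in\mathbb{R}$ of $(p-c)\big(1-F(p/q)\big)$, and $\overline p(q)=p(q)/q$. *)

From Stdlib Require Import Reals.
From Coquelicot Require Import Coquelicot.
Open Scope R_scope.

Definition profit (F : R -> R) (c q p : R) : R := (p - c) * (1 - F (p / q)).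

Definition unique_maximizer (F : R -> R) (c q p : R) : Prop :=
  (forall p', profit F c q p' <= profit F c q p) /\
  (forall p', (forall p'', profit F c q p'' <= profit F c q p') -> p' = p).

Definition r_fun (F f : R -> R) (v : R) : R := (1 - F v) / f v.
Definition psi (F f : R -> R) (v : R) : R := v - r_fun F f v.

Definition cdf_with_C2_density (F f : R -> R) : Prop :=
  (forall x, x <= 0 -> F x = 0) /\
  (forall x, 1 <= x -> F x = 1) /\
  (forall x, continuous F x) /\
  (forall v, 0 < v < 1 -> is_derive F v (f v)) /\
  (forall v, 0 < v < 1 -> 0 < f v) /\
  (forall v, 0 < v < 1 ->
     ex_derive f v /\ ex_derive (Derive f) v /\ continuous (Derive_n f 2) v).

From Stdlib Require Import Reals Ranalysis5 Lra.
From Coquelicot Require Import Coquelicot.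
Open Scope R_scope.

(* The first-order condition of the pricing problem says that the normalized
   optimal price v = p(q)/q solves psi(v) = c/q.  Since psi is strictly
   increasing wherever it is positive, q |-> p(q)/q is the composite of an
   inverse of psi with the decreasing map q |-> c/q, and the inverse function
   theorem gives (p(q)/q)' = - c / (q^2 psi'(p(q)/q)) < 0. *)

Lemma MVT_interior (g dg : R -> R) (a b : R) : a < b ->
  (forall x, a < x < b -> is_derive g x (dg x)) ->
  (forall x, a <= x <= b -> continuity_pt g x) ->
  exists x, a < x < b /\ g b - g a = dg x * (b - a).
Proof.
  intros Hab Hd Hc.
  assert (pr_g : forall x, a < x < b -> derivable_pt g x).
  { intros x Hx; apply ex_derive_Reals_0; exists (dg x); exact (Hd x Hx). }
  assert (pr_id : forall x, a < x < b -> derivable_pt id x).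
  { intros; apply derivable_pt_id. }
  destruct (MVT g id a b pr_g pr_id Hab Hc) as [x [Hx Heq]].
  { intros; apply derivable_continuous_pt, derivable_pt_id. }
  exists x; split; [exact Hx|].
  rewrite (Derive_Reals g x), (is_derive_unique g x (dg x) (Hd x Hx)) in Heq.
  rewrite (derive_pt_eq_0 id x 1 _ (derivable_pt_lim_id x)) in Heq.
  unfold id in Heq; lra.
Qed.

Lemma is_derive_pos_exists_greater (g : R -> R) (x b l : R) :
  x < b -> is_derive g x l -> 0 < l -> exists y, x < y <= b /\ g x < g y.
Proof.
  intros Hxb Hd Hl.
  apply is_derive_Reals in Hd.
  destruct (Hd l Hl) as [d Hdl].
  pose proof (cond_pos d) as Hd0.
  set (h := Rmin (d / 2) (b - x)).
  assert (Hh : 0 < h) by (apply Rmin_pos; lra).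
  assert (Hhd : h <= d / 2) by apply Rmin_l.
  assert (Hhb : h <= b - x) by apply Rmin_r.
  specialize (Hdl h ltac:(lra) ltac:(rewrite Rabs_pos_eq; lra)).
  apply Rabs_def2 in Hdl.
  assert (Hq : 0 < (g (x + h) - g x) / h * h) by (apply Rmult_lt_0_compat; lra).
  replace ((g (x + h) - g x) / h * h) with (g (x + h) - g x) in Hq by (field; lra).
  exists (x + h); split; lra.
Qed.

(* At a maximizer of g on [a, b] other than b, g would still increase. *)
Lemma increasing_of_derive_pos_above (g : R -> R) (a b : R) : a < b ->
  (forall x, a <= x <= b -> continuity_pt g x) ->
  (forall x, a <= x < b -> g a <= g x -> exists l, is_derive g x l /\ 0 < l) ->
  g a < g b.
Proof.
  intros Hab Hcont Hder.
  assert (Hstep : forall x, a <= x < b -> g a <= g x -> exists y, x < y <= b /\ g x < g y).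
  { intros x Hx Hgx. destruct (Hder x Hx Hgx) as [l [Hl Hl0]].
    exact (is_derive_pos_exists_greater g x b l (proj2 Hx) Hl Hl0). }
  destruct (continuity_ab_maj g a b) as [m [Hmax Hm]]; [lra | exact Hcont |].
  destruct (Req_dec m b) as [-> | Hmb].
  - destruct (Hstep a) as [y [Hy Hgy]]; [lra | lra |].
    specialize (Hmax y ltac:(lra)); lra.
  - destruct (Hstep m) as [y [Hy Hgy]]; [lra | apply Hmax; lra |].
    specialize (Hmax y ltac:(lra)); lra.
Qed.

Lemma is_derive_max_eq_0 (g : R -> R) (x l : R) :
  (forall y, g y <= g x) -> is_derive g x l -> l = 0.
Proof.
  intros Hmax Hd.
  assert (pr : derivable_pt g x) by (apply ex_derive_Reals_0; exists l; exact Hd).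
  rewrite <- (is_derive_unique g x l Hd), <- (Derive_Reals g x pr).
  apply (deriv_maximum g (x - 1) (x + 1)); [lra | lra |].
  intros y _ _; apply Hmax.
Qed.

Lemma is_derive_right_inverse (f g : R -> R) (lb ub y : R) : lb < ub ->
  (forall x x', lb <= x -> x < x' -> x' <= ub -> f x < f x') ->
  (forall x, lb <= x <= ub -> ex_derive f x) ->
  (forall u, f lb <= u <= f ub -> f (g u) = u) ->
  (forall u, f lb <= u <= f ub -> lb <= g u <= ub) ->
  f lb < y < f ub -> Derive f (g y) <> 0 ->
  is_derive g y (/ Derive f (g y)).
Proof.
  intros Hlu Hinc Hder Hfg Hrange Hy Hnz.
  assert (Hgf : forall x, lb <= x <= ub -> g (f x) = x).
  { intros x Hx; exact (leftinv_is_rightinv_interv f g lb ub Hinc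
      (fun u H1 H2 => Hfg u (conj H1 H2)) (fun u H1 H2 => Hrange u (conj H1 H2)) x Hx). }
  assert (Hcont : continuity_pt g y).
  { apply (continuity_pt_recip_interv f g lb ub Hlu Hinc
      (fun u H1 H2 => Hfg u (conj H1 H2)) (fun u H1 H2 => Hrange u (conj H1 H2))); [|exact Hy].
    intros x Hx; apply continuity_pt_filterlim,
      (@ex_derive_continuous R_AbsRing R_NormedModule), Hder, Hx. }
  assert (Hpr : forall x, g (f lb) <= x <= g (f ub) -> derivable_pt f x).
  { intros x Hx; rewrite !Hgf in Hx by lra; apply ex_derive_Reals_0, Hder, Hx. }
  assert (Hgy : g (f lb) <= g y <= g (f ub)) by (rewrite !Hgf by lra; apply Hrange; lra).
  apply is_derive_Reals.
  rewrite <- (Derive_Reals f (g y) (Hpr (g y) Hgy)), <- (Rdiv_1_l (derive_pt _ _ _)).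
  apply (derivable_pt_lim_recip_interv f g (f lb) (f ub) y Hpr Hcont); [lra | exact Hy | |].
  - intros u Hu; exact (Hfg u Hu).
  - rewrite Derive_Reals; exact Hnz.
Qed.

Section Monopoly.

Variables (F f : R -> R) (c : R).
Hypothesis HF : cdf_with_C2_density F f.
Hypothesis Hc : 0 < c.

(* f need not be positive at 1, hence the mean value point must be interior. *)
Lemma cdf_lt_1 (v : R) : 0 < v < 1 -> F v < 1.
Proof.
  destruct HF as [_ [HF1 [HFc [HFd [Hfpos _]]]]]; intros Hv.
  destruct (MVT_interior F f v 1) as [x [Hx Heq]]; [lra | | |].
  - intros x Hx; apply HFd; lra.
  - intros x _; apply continuity_pt_filterlim, HFc.
  - rewrite HF1 in Heq by lra.
    assert (0 < f x * (1 - v)) by (apply Rmult_lt_0_compat; [apply Hfpos|]; lra).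
    lra.
Qed.

Lemma ex_derive_psi (v : R) : 0 < v < 1 -> ex_derive (psi F f) v.
Proof.
  destruct HF as [_ [_ [_ [HFd [Hfpos Hf2]]]]]; intros Hv.
  apply (ex_derive_minus (fun y => y) (fun y => (1 - F y) / f y)); [apply ex_derive_id|].
  apply (ex_derive_div (fun y => 1 - F y) f).
  - apply (ex_derive_minus (fun _ => 1) F); [apply ex_derive_const|].
    exists (f v); exact (HFd v Hv).
  - apply Hf2, Hv.
  - specialize (Hfpos v Hv); lra.
Qed.

Hypothesis Hpsi : forall v, 0 < v < 1 -> 0 < psi F f v -> 0 < Derive (psi F f) v.

Lemma psi_increasing (a x y : R) :
  0 < a <= x -> x < y -> y < 1 -> 0 < psi F f a -> psi F f x < psi F f y.
Proof.
  assert (Hinc : forall a b, 0 < a -> a < b -> b < 1 -> 0 < psi F f a -> psi F f a < psi F f b).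
  { intros a' b Ha Hab Hb Hpa.
    apply increasing_of_derive_pos_above; [exact Hab | |].
    - intros z Hz; apply continuity_pt_filterlim,
        (@ex_derive_continuous R_AbsRing R_NormedModule), ex_derive_psi; lra.
    - intros z Hz Hpz; exists (Derive (psi F f) z); split.
      + apply Derive_correct, ex_derive_psi; lra.
      + apply Hpsi; lra. }
  intros Hax Hxy Hy Hpa.
  apply Hinc; [lra | exact Hxy | exact Hy |].
  destruct (Req_dec a x) as [<- | Hne]; [exact Hpa|].
  specialize (Hinc a x ltac:(lra) ltac:(lra) ltac:(lra) Hpa); lra.
Qed.

Lemma psi_le_reflect (x y : R) : 0 < x < 1 -> 0 < y < 1 ->
  0 < psi F f y -> psi F f y <= psi F f x -> y <= x.
Proof.
  intros Hx Hy Hpy Hle.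
  destruct (Rle_lt_dec y x) as [Hyx | Hxy]; [exact Hyx|].
  destruct (Rle_lt_dec (psi F f x) 0) as [Hpx | Hpx]; [lra|].
  pose proof (psi_increasing x x y ltac:(lra) Hxy (proj2 Hy) Hpx); lra.
Qed.

Lemma is_derive_profit (q P : R) : 0 < q -> 0 < P / q < 1 ->
  is_derive (profit F c q) P (1 - F (P / q) - (P - c) * f (P / q) / q).
Proof.
  destruct HF as [_ [_ [_ [HFd _]]]]; intros Hq Hv.
  unfold profit; auto_derive.
  - exists (f (P / q)); exact (HFd _ Hv).
  - replace (Derive (fun x => F x) (P * / q)) with (f (P / q)).
    + unfold Rdiv; ring.
    + symmetry; apply is_derive_unique, HFd, Hv.
Qed.

Lemma maximizer_in_support (q P : R) : c < q ->
  (forall P', profit F c q P' <= profit F c q P) -> 0 < P / q < 1.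
Proof.
  destruct HF as [HF0 [HF1 _]]; intros Hcq Hmax.
  assert (Hmid : 0 < profit F c q ((c + q) / 2)).
  { unfold profit; apply Rmult_lt_0_compat; [lra|].
    enough (F ((c + q) / 2 / q) < 1) by lra.
    apply cdf_lt_1; split.
    - apply Rdiv_lt_0_compat; lra.
    - apply Rlt_div_l; lra. }
  specialize (Hmax ((c + q) / 2)); unfold profit in *.
  destruct (Rle_lt_dec 1 (P / q)) as [H1 | H1].
  { rewrite (HF1 _ H1) in Hmax; lra. }
  destruct (Rle_lt_dec (P / q) 0) as [H0 | H0]; [|lra].
  rewrite (HF0 _ H0) in Hmax.
  assert (HP : P = P / q * q) by (field; lra).
  nra.
Qed.

Lemma maximizer_first_order (q P : R) : c < q ->
  (forall P', profit F c q P' <= profit F c q P) -> psi F f (P / q) = c / q.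
Proof.
  intros Hcq Hmax.
  pose proof (maximizer_in_support q P Hcq Hmax) as Hv.
  pose proof (is_derive_max_eq_0 _ _ _ Hmax (is_derive_profit q P ltac:(lra) Hv)) as Hfoc.
  destruct HF as [_ [_ [_ [_ [Hfpos _]]]]]; specialize (Hfpos _ Hv).
  unfold psi, r_fun.
  replace (1 - F (P / q)) with ((P - c) * f (P / q) / q) by lra.
  field; lra.
Qed.

Variable p : R -> R.
Hypothesis Hp : forall q, c < q -> unique_maximizer F c q (p q).

(* At quality c / y the first-order condition reads psi (p/q) = y. *)
Definition psi_inv (y : R) : R := p (c / y) / (c / y).

Lemma psi_inv_spec (y : R) : 0 < y < 1 -> 0 < psi_inv y < 1 /\ psi F f (psi_inv y) = y.
Proof.
  intros Hy.
  assert (Hcy : c < c / y) by (apply Rlt_div_r; nra).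
  destruct (Hp _ Hcy) as [Hmax _].
  split; [exact (maximizer_in_support _ _ Hcy Hmax)|].
  unfold psi_inv; rewrite (maximizer_first_order _ _ Hcy Hmax).
  field; lra.
Qed.

Lemma is_derive_psi_inv (y : R) : 0 < y < 1 ->
  is_derive psi_inv y (/ Derive (psi F f) (psi_inv y)).
Proof.
  intros Hy.
  set (lb := psi_inv (y / 2)); set (ub := psi_inv ((1 + y) / 2)).
  destruct (psi_inv_spec (y / 2) ltac:(lra)) as [Hlb Hpsi_lb].
  destruct (psi_inv_spec ((1 + y) / 2) ltac:(lra)) as [Hub Hpsi_ub].
  fold lb in Hlb, Hpsi_lb; fold ub in Hub, Hpsi_ub.
  assert (Hrange : forall u, psi F f lb <= u <= psi F f ub -> lb <= psi_inv u <= ub).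
  { rewrite Hpsi_lb, Hpsi_ub; intros u Hu.
    destruct (psi_inv_spec u ltac:(lra)) as [Hu01 Hpsi_u]; split.
    - apply psi_le_reflect; [exact Hu01 | exact Hlb | lra | lra].
    - apply psi_le_reflect; [exact Hub | exact Hu01 | lra | lra]. }
  assert (Hlu : lb < ub).
  { assert (Hle : lb <= ub) by (apply psi_le_reflect; [exact Hub | exact Hlb | lra | lra]).
    destruct (Req_dec lb ub) as [E | Hne]; [|lra].
    rewrite E in Hpsi_lb; lra. }
  apply (is_derive_right_inverse (psi F f) psi_inv lb ub y Hlu).
  - intros x x' Hx Hxx' Hx'; apply (psi_increasing lb); lra.
  - intros x Hx; apply ex_derive_psi; lra.
  - rewrite Hpsi_lb, Hpsi_ub; intros u Hu; apply psi_inv_spec; lra.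
  - exact Hrange.
  - lra.
  - destruct (psi_inv_spec y Hy) as [Hy01 Hpsi_y].
    apply Rgt_not_eq, Hpsi; lra.
Qed.

End Monopoly.

Theorem lemma1 (ql qh c : R) (F f : R -> R) (p : R -> R) :
  0 < ql -> ql < qh -> 0 < c -> c < ql ->
  cdf_with_C2_density F f ->
  (forall v, 0 < v < 1 -> 0 < psi F f v -> 0 < Derive (psi F f) v) ->
  (forall q, c < q -> unique_maximizer F c q (p q)) ->
  forall q, ql <= q <= qh ->
    ex_derive (fun t => p t / t) q /\ Derive (fun t => p t / t) q < 0.
Proof.
  intros _ _ Hc Hcql HF Hpsi Hp q Hq.
  assert (Hcq : 0 < c / q < 1) by (split; [apply Rdiv_lt_0_compat | apply Rlt_div_l]; lra).
  assert (Hinv : psi_inv c p (c / q) = p q / q)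
    by (unfold psi_inv; replace (c / (c / q)) with q by (field; lra); reflexivity).
  destruct (psi_inv_spec F f c HF Hc p Hp (c / q) Hcq) as [Hv Hpsi_v].
  rewrite Hinv in Hv, Hpsi_v.
  set (l := - c / q ^ 2 * / Derive (psi F f) (p q / q)).
  assert (Hd : is_derive (fun t => p t / t) q l).
  { apply (is_derive_ext_loc (fun t => psi_inv c p (c / t))).
    - apply (filter_imp (fun t => 0 < t)); [|apply (open_gt 0 q); lra].
      intros t Ht; unfold psi_inv.
      replace (c / (c / t)) with t by (field; lra); reflexivity.
    - unfold l; rewrite <- Hinv; apply (is_derive_comp (psi_inv c p) (fun t => c / t)).
      + apply is_derive_psi_inv; assumption.
      + auto_derive; [lra | field; lra]. }
  split; [exists l; exact Hd|].
  replace (Derive (fun t => p t / t) q) with l by (symmetry; apply is_derive_unique, Hd).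
  unfold l.
  assert (Hslope : 0 < Derive (psi F f) (p q / q)) by (apply Hpsi; lra).
  assert (0 < c / q ^ 2 * / Derive (psi F f) (p q / q)).
  { apply Rmult_lt_0_compat; [apply Rdiv_lt_0_compat; nra | apply Rinv_0_lt_compat, Hslope]. }
  unfold Rdiv in *; lra.
Qed.
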